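(* Let $\overline p$ be a Goresky–MacPherson perversity, let $X$ be an $n$-dimensional filtered space without strata of codimension $1$, and let $x_0$ be a regular point of $X$. Let $$\ell_{\overline p}=\sup\{k\in\overline{\mathbb N}\mid \overline p(k)=\overline t(k)\}=\sup\{k\in\overline{\mathbb N}\mid D\overline p(k)=0\},$$ called the cleaving point of $\overline p$. Then $$\pi_1^{\overline p}(X,x_0)=\pi_1^{\overline t}(X\setminus X_{n-\ell_{\overline p}-1},x_0).$$ Here $X\setminus X_{n-\ell_{\overline p}-1}$ carries the induced filtration and $X_m=\emptyset$ for $m\le-1$.
   Context: Filtered spaces. A filtered space of formal dimension $n$ is a nonempty space $X$ with closed subsets $\emptyset=X_{-1}\subseteq\cdots\subseteq X_{n-1}\subsetneq X_n=X$. Strata are the nonempty connected components of $X_i\setminus X_{i-1}$, with codimension $n-i$. Strata in $X\setminus X_{n-1}$ are regular. An open subset $U$ has the induced filtration $U\cap X_i$. Perversities. A GM perversity is a map $\overline p\colon\{2,3,\dots\}\to\mathbb N$ with $\overline p(2)=0$ and $\overline p(i)\le\overline p(i+1)\le\overline p(i)+1$. On a filtered space without codimension-one strata, it assigns $\overline p(\operatorname{codim}S)$ to each singular stratum $S$ and $0$ to regular strata. The top perversity is $\overline t(k)=k-2$, and $D\overline p(k)=k-2-\overline p(k)$. Full simplices and intersection homotopy groups. A simplex $\sigma\colon\Delta^j\to X$ is $\overline p$-allowable if $\dim\sigma^{-1}S\le j-\operatorname{codim}S+\overline p(S)$ for each singular stratum $S$. Here $\dim$ is polyhedral dimension, i.e.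 the minimal dimension of a polyhedron containing the set, with $\dim\emptyset=-\infty$. A simplex is $\overline p$-full if it and all iterated faces are allowable. The $\overline p$-full simplices form a Kan simplicial subset $\mathscr G_{\overline p}X\subseteq\mathrm{Sing}\,X$, and $\pi_1^{\overline p}(X,x_0)=\pi_1(\mathscr G_{\overline p}X,x_0)$. *)

From HB Require Import structures.
From mathcomp Require Import all_boot all_order all_algebra.
From mathcomp Require Import all_classical all_reals all_analysis.
From mathcomp Require Import Rstruct Rstruct_topology.
From Stdlib Require Import Relations.
Set Implicit Arguments. Unset Strict Implicit. Unset Printing Implicit Defensive.
Import Order.TTheory GRing.Theory Num.Theory.
Local Open Scope classical_set_scope.
Local Open Scope ring_scope.

Notation R := Rdefinitions.R.

Definition stdsimplex (j : nat) : set 'rV[R]_(j.+1) :=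
  [set v | (forall i, 0 <= v ord0 i) /\ \sum_i v ord0 i = 1].
Arguments stdsimplex j : clear implicits.

Definition face_map (j : nat) (i : 'I_(j.+2)) (v : 'rV[R]_(j.+1)) : 'rV[R]_(j.+2) :=
  \row_k (if unlift i k is Some k' then v ord0 k' else 0).

Definition pt0 : 'rV[R]_1 := const_mx 1.

Definition hull (m d : nat) (P : 'I_(d.+1) -> 'rV[R]_m) : set 'rV[R]_m :=
  [set v | exists w : 'I_(d.+1) -> R,
      (forall k, 0 <= w k) /\ \sum_k w k = 1 /\ v = \sum_k w k *: P k].

Definition in_polyhedron_dim_le (m d : nat) (A : set 'rV[R]_m) : Prop :=
  exists (N : nat) (P : 'I_N -> 'I_(d.+1) -> 'rV[R]_m),
    A `<=` \bigcup_(l in [set: 'I_N]) hull (P l).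

(* polyhedral dimension of A is <= d (d an integer; dim set0 = -oo) *)
Definition pdim_le (m : nat) (A : set 'rV[R]_m) (d : int) : Prop :=
  match d with
  | Posz k => in_polyhedron_dim_le k A
  | Negz _ => A = set0
  end.

(* p is only meaningful on {2,3,...} *)
Definition GM_perversity (p : nat -> nat) : Prop :=
  p 2 = 0%N /\ forall k, (2 <= k)%N -> (p k <= p k.+1 <= (p k).+1)%N.

Definition top_perv (k : nat) : nat := (k - 2)%N.
Definition dual_perv (p : nat -> nat) (k : nat) : nat := (k - 2 - p k)%N.

(* extended naturals N-bar = option nat, None = +oo *)
Definition nbar_le (a b : option nat) : Prop :=
  match a, b with
  | _, None => True
  | None, Some _ => False
  | Some a, Some b => (a <= b)%N
  end.

Definition is_cleaving_point (p : nat -> nat) (l : option nat) : Prop :=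
  (forall k, (2 <= k)%N -> p k = top_perv k -> nbar_le (Some k) l) /\
  (forall b : option nat,
     (forall k, (2 <= k)%N -> p k = top_perv k -> nbar_le (Some k) b) -> nbar_le l b).

Definition filtration (T : topologicalType) (n : nat) (F : int -> set T) : Prop :=
  (exists x : T, True) /\
  (forall i : int, i <= -1 -> F i = set0) /\
  (forall i : int, n%:Z <= i -> F i = setT) /\
  (forall i, closed (F i)) /\
  (forall i, F i `<=` F (i + 1)) /\
  F (n%:Z - 1) != setT.

(* We work with the filtered space U (an open subset of T with the induced
   filtration U `&` F i); U = setT gives X itself.
   S is a stratum of U of depth i (i.e. of codimension n - i):
   a nonempty connected component of U `&` (F i `\` F (i-1)). *)
Definition stratum (T : topologicalType) (F : int -> set T) (U : set T)
    (i : int) (S : set T) : Prop :=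
  exists2 x, (U `&` (F i `\` F (i - 1))) x &
    S = connected_component (U `&` (F i `\` F (i - 1))) x.

Definition no_codim_one (T : topologicalType) (n : nat) (F : int -> set T) : Prop :=
  F (n%:Z - 1) `\` F (n%:Z - 2) = set0.

Definition singular_simplex (T : topologicalType) (U : set T) (j : nat)
    (s : 'rV[R]_(j.+1) -> T) : Prop :=
  {within stdsimplex j, continuous s} /\ (forall v, stdsimplex j v -> U (s v)).

Definition allowable (T : topologicalType) (n : nat) (F : int -> set T) (U : set T)
    (p : nat -> nat) (j : nat) (s : 'rV[R]_(j.+1) -> T) : Prop :=
  forall (c : nat) (S : set T), (1 <= c)%N -> (c <= n)%N ->
    stratum F U (n%:Z - c%:Z) S ->
    pdim_le (stdsimplex j `&` (s @^-1` S)) (j%:Z - c%:Z + (p c)%:Z).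

Fixpoint full (T : topologicalType) (n : nat) (F : int -> set T) (U : set T)
    (p : nat -> nat) (j : nat) : ('rV[R]_(j.+1) -> T) -> Prop :=
  match j with
  | 0%N => fun s => allowable n F U p s
  | j'.+1 => fun s => allowable n F U p s /\
                      forall i : 'I_(j'.+2), full n F U p (s \o face_map i)
  end.

Definition Gsimplex (T : topologicalType) (n : nat) (F : int -> set T) (U : set T)
    (p : nat -> nat) (j : nat) (s : 'rV[R]_(j.+1) -> T) : Prop :=
  singular_simplex U s /\ full n F U p s.

Definition vtx (T : Type) (s : 'rV[R]_2 -> T) (i : 'I_2) : T := s (face_map i pt0).

Definition Gloop (T : topologicalType) (n : nat) (F : int -> set T) (U : set T)
    (p : nat -> nat) (x0 : T) (s : 'rV[R]_2 -> T) : Prop :=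
  Gsimplex n F U p s /\ vtx s ord0 = x0 /\ vtx s ord_max = x0.

Definition agree (T : Type) (j : nat) (s t : 'rV[R]_(j.+1) -> T) : Prop :=
  forall v, stdsimplex j v -> s v = t v.

Definition elem_htpy (T : topologicalType) (n : nat) (F : int -> set T) (U : set T)
    (p : nat -> nat) (x0 : T) (s t : 'rV[R]_2 -> T) : Prop :=
  agree s t \/
  exists w : 'rV[R]_3 -> T, Gsimplex n F U p w /\
    agree (w \o face_map (0 : 'I_3)) (fun _ => x0) /\
    agree (w \o face_map (1 : 'I_3)) t /\
    agree (w \o face_map (2 : 'I_3)) s.

(* two loops represent the same element of pi_1^p(U, x0) *)
Definition htpy (T : topologicalType) (n : nat) (F : int -> set T) (U : set T)
    (p : nat -> nat) (x0 : T) : relation ('rV[R]_2 -> T) :=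
  clos_refl_sym_trans _ (fun s t => Gloop n F U p x0 s /\ Gloop n F U p x0 t /\
                                    elem_htpy n F U p x0 s t).

(* The inclusion G_q V -> G_p U induces a well-defined bijection
   pi_1^q(V, x0) -> pi_1^p(U, x0) (a homomorphism, since it is induced by a
   simplicial map; hence an isomorphism of groups). *)
Definition pi1_incl_iso (T : topologicalType) (n : nat) (F : int -> set T)
    (V : set T) (q : nat -> nat) (U : set T) (p : nat -> nat) (x0 : T) : Prop :=
  (forall s, Gloop n F V q x0 s -> Gloop n F U p x0 s) /\
  (forall s t, Gloop n F V q x0 s -> Gloop n F V q x0 t ->
       htpy n F V q x0 s t -> htpy n F U p x0 s t) /\
  (forall s, Gloop n F U p x0 s -> exists2 t, Gloop n F V q x0 t & htpy n F U p x0 s t) /\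
  (forall s t, Gloop n F V q x0 s -> Gloop n F V q x0 t ->
       htpy n F U p x0 s t -> htpy n F V q x0 s t).

(* X_{n - l - 1}, with X_{-oo} = set0 for l = +oo *)
Definition cleave_set (T : Type) (n : nat) (F : int -> set T) (l : option nat) : set T :=
  match l with
  | None => set0
  | Some l => F (n%:Z - l%:Z - 1)
  end.

From HB Require Import structures.
From mathcomp Require Import all_boot all_order all_algebra.
From mathcomp Require Import all_classical all_reals all_analysis.
From mathcomp Require Import Rstruct zify.
From Stdlib Require Import Relation_Operators.
Set Implicit Arguments.
Unset Strict Implicit.
Unset Printing Implicit Defensive.

Import Order.TTheory GRing.Theory Num.Theory.
Local Open Scope classical_set_scope.
Local Open Scope ring_scope.

(* For a GM perversity, p(k) = t(k) holds exactly for 2 <= k <= l: once p drops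
   below t it stays below, since t grows by one at each step and p by at most one.
   Hence on the strata of codimension at most l, which are the strata of
   X \ X_{n-l-1}, p-allowability is t-allowability; and a p-allowable j-simplex
   with j <= 2 misses every stratum of codimension c > l, where the bound
   j - c + p(c) <= j - 3 is negative.  So G_p X and G_t(X \ X_{n-l-1}) have the
   same simplices of dimension at most 2, which are all that loops and their
   homotopies involve. *)

Lemma GM_perversity_le_top p k :
  GM_perversity p -> (2 <= k)%N -> (p k <= top_perv k)%N.
Proof.
move=> [p2 hp] /subnK <-; rewrite /top_perv addnK.
elim: (k - 2)%N => [|m IH]; first by rewrite p2.
have /andP[_] := hp (m + 2)%N (leq_addl _ _); rewrite -addSn; lia.
Qed.

Lemma GM_perversity_lt_top_ge p c k : GM_perversity p ->
  (2 <= c <= k)%N -> (p c < top_perv c)%N -> (p k < top_perv k)%N.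
Proof.
move=> [_ hp] /andP[c2 /subnK <-]; rewrite /top_perv.
elim: (k - c)%N => [//|m IH] /IH.
have /andP[_] := hp (m + c)%N (leq_trans c2 (leq_addl _ _)); rewrite -addSn; lia.
Qed.

Lemma cleaving_point_top p l c : GM_perversity p -> is_cleaving_point p l ->
  (2 <= c)%N -> p c = top_perv c <-> nbar_le (Some c) l.
Proof.
move=> hp [ub lub] c2; split; first exact: ub.
move=> cl; apply/eqP; rewrite eqn_leq GM_perversity_le_top //= leqNgt.
apply/negP => ltc.
suff : nbar_le l (Some c.-1) by case: l cl {ub lub} => //= l'; lia.
apply: lub => k k2 eqk /=; have [ck|] := leqP c k; last lia.
have cck : (2 <= c <= k)%N by rewrite c2 ck.
by have := GM_perversity_lt_top_ge hp cck ltc; rewrite eqk ltnn.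
Qed.

Lemma pdim_le_set0 m d : pdim_le (set0 : set 'rV[R]_m) d.
Proof. by case: d => //= k; exists 0%N, (fun _ _ => (0 : 'rV[R]_m)) => ?. Qed.

Lemma pdim_le_neg m (A : set 'rV[R]_m) d : d < 0 -> pdim_le A d -> A = set0.
Proof. by case: d. Qed.

Lemma face_map_stdsimplex j (i : 'I_j.+2) v :
  stdsimplex j v -> stdsimplex j.+1 (face_map i v).
Proof.
move=> [ge0 sum1]; split=> [k|]; first by rewrite mxE; case: unlift.
rewrite (bigD1_ord i) //= mxE unlift_none add0r -sum1.
by apply: eq_bigr => k _; rewrite mxE liftK.
Qed.

Section Filtration.
Variables (T : topologicalType) (n : nat) (F : int -> set T).

Lemma filtration_le : filtration n F -> forall i i', i <= i' -> F i `<=` F i'.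
Proof.
move=> [_ [_ [_ [_ [incr _]]]]] i i' ii'.
have [k ->] : exists k : nat, i' = i + k%:Z by exists `|i' - i|%N; lia.
elim: k => [|k IH]; first by rewrite addr0.
by apply: subset_trans IH _; rewrite -addn1 PoszD addrA.
Qed.

Lemma filtration_layer : filtration n F ->
  forall m x, F m x -> exists2 i : nat, i%:Z <= m & (F i `\` F (i%:Z - 1)) x.
Proof.
move=> [_ [neg _]] [k|k] x; last by rewrite neg //; lia.
elim: k x => [|k IH] x Fkx; first by exists 0%N => //; split=> //; rewrite neg.
have [/IH[i ik Lix]|nFkx] := pselect (F k x); first by exists i => //; lia.
by exists k.+1 => //; split=> //; rewrite -addn1 PoszD addrK.
Qed.

Lemma stratum_sub U i S : stratum F U i S -> S `<=` U `&` (F i `\` F (i - 1)).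
Proof. by case=> x _ ->; apply: connected_component_sub. Qed.

Lemma eq_stratum U U' i S :
  {in F i `\` F (i - 1), U =1 U'} -> stratum F U i S -> stratum F U' i S.
Proof.
move=> eqU [x Lx ->]; have E : U `&` (F i `\` F (i - 1)) = U' `&` (F i `\` F (i - 1)).
  by apply/seteqP; split=> y [Uy Ly]; split=> //; [rewrite -eqU | rewrite eqU];
    rewrite // in_setE.
by exists x; rewrite -E.
Qed.

Lemma no_codim_one_stratum U S : no_codim_one n F -> ~ stratum F U (n%:Z - 1) S.
Proof.
move=> F1 [x [_ Lx] _]; suff : (F (n%:Z - 1) `\` F (n%:Z - 2)) x by rewrite F1.
by rewrite -[2]/(1 + 1) opprD addrA.
Qed.

End Filtration.

Lemma full_allowable (T : topologicalType) n (F : int -> set T) U p j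
    (s : 'rV[R]_j.+1 -> T) :
  full n F U p s -> allowable n F U p s.
Proof. by case: j s => [|j] s //= []. Qed.

Lemma nbar_le_someP c (l : option nat) :
  nbar_le (Some c) l \/ exists2 l', l = Some l' & (l' < c)%N.
Proof. by case: l => [l'|] /=; [case: (leqP c l') => ?; [left|right; exists l']|left]. Qed.

Section Cleaving.
Variables (T : topologicalType) (n : nat) (F : int -> set T).
Variables (p : nat -> nat) (l : option nat).
Hypotheses (filtF : filtration n F) (F1 : no_codim_one n F).
Hypotheses (GMp : GM_perversity p) (cleave_l : is_cleaving_point p l).

Local Notation V := (~` cleave_set n F l).
Local Notation layer i := (F i `\` F (i - 1)).

Lemma layer_cleave_compl c : nbar_le (Some c) l -> layer (n%:Z - c%:Z) `<=` V.
Proof.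
case: l => [l' /= cl x [_ nFx] Fx|_ x _ []].
by apply/nFx/(filtration_le filtF _ Fx); lia.
Qed.

Lemma filtration_cleave_set l' c :
  l = Some l' -> (l' < c)%N -> F (n%:Z - c%:Z) `<=` cleave_set n F l.
Proof. by move=> -> l'c; apply: (filtration_le filtF); lia. Qed.

Lemma stratum_cleave_compl c S : nbar_le (Some c) l ->
  stratum F V (n%:Z - c%:Z) S <-> stratum F setT (n%:Z - c%:Z) S.
Proof.
move=> /layer_cleave_compl LV.
have eqV : {in layer (n%:Z - c%:Z), V =1 setT}.
  by move=> x; rewrite in_setE => /LV Vx; apply/propext.
by split; apply: eq_stratum => // x /eqV.
Qed.

Lemma allowable_stratum_cleave j (s : 'rV[R]_j.+1 -> T) c S :
  s @` stdsimplex j `<=` V -> (1 <= c)%N ->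
  (stratum F V (n%:Z - c%:Z) S ->
     pdim_le (stdsimplex j `&` s @^-1` S) (j%:Z - c%:Z + (top_perv c)%:Z)) <->
  (stratum F setT (n%:Z - c%:Z) S ->
     pdim_le (stdsimplex j `&` s @^-1` S) (j%:Z - c%:Z + (p c)%:Z)).
Proof.
move=> sV c1; have [c2|c_lt2] := leqP 2 c; last first.
  have -> : c = 1%N by lia.
  by split=> _ /(no_codim_one_stratum F1).
have [cl|[l' el l'c]] := nbar_le_someP c l.
  have -> : p c = top_perv c by apply/(cleaving_point_top GMp cleave_l c2).
  by rewrite (propext (stratum_cleave_compl S cl)).
split=> _ /stratum_sub SL.
all: suff -> : stdsimplex j `&` s @^-1` S = set0 by apply: pdim_le_set0.
all: apply/seteqP; split=> // v [jv /SL[_ [Fsv _]]].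
all: by case: (sV _ (imageP s jv)); apply: (filtration_cleave_set el l'c).
Qed.

Lemma allowable_cleave j (s : 'rV[R]_j.+1 -> T) : s @` stdsimplex j `<=` V ->
  allowable n F V top_perv s <-> allowable n F setT p s.
Proof.
by move=> sV; split=> allow c S c1 cn; apply/(allowable_stratum_cleave S sV c1)/allow.
Qed.

Lemma full_cleave j (s : 'rV[R]_j.+1 -> T) : s @` stdsimplex j `<=` V ->
  full n F V top_perv s <-> full n F setT p s.
Proof.
elim: j s => [|j IH] s sV /=; first exact: allowable_cleave.
have fV i : (s \o face_map i) @` stdsimplex j `<=` V.
  by move=> _ [v jv <-]; apply/sV/imageP/face_map_stdsimplex.
by split=> -[a f]; split=> [|i]; first [exact/(allowable_cleave sV) | exact/(IH _ (fV i))].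
Qed.

Lemma allowable_image_cleave j (s : 'rV[R]_j.+1 -> T) : (j <= 2)%N ->
  allowable n F setT p s -> s @` stdsimplex j `<=` V.
Proof.
move=> j2 allow _ [v jv <-]; case el: l => [l'|] /= Fsv //.
have [i i_le Lsv] := filtration_layer filtF Fsv.
have l'2 : (2 <= l')%N.
  by have /= := (cleaving_point_top GMp cleave_l (leqnn 2)).1 (proj1 GMp); rewrite el.
pose c := (n - i)%N; have ci : n%:Z - c%:Z = i by rewrite /c; lia.
have pc : (p c < top_perv c)%N.
  rewrite ltn_neqAle (GM_perversity_le_top GMp) ?andbT; last by rewrite /c; lia.
  apply/eqP => /(cleaving_point_top GMp cleave_l) /=; rewrite el /c; lia.
pose S := connected_component (setT `&` layer i%:Z) (s v).
have strS : stratum F setT (n%:Z - c%:Z) S by rewrite ci; exists (s v).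
have neg_dim : j%:Z - c%:Z + (p c)%:Z < 0 by move: pc; rewrite /top_perv; lia.
have := pdim_le_neg neg_dim (allow c S ltac:(rewrite /c; lia) (leq_subr _ _) strS).
move=> /seteqP[/(_ v) + _]; apply; split=> //.
exact: connected_component_refl.
Qed.

Lemma Gsimplex_cleave j : (j <= 2)%N ->
  @Gsimplex T n F V top_perv j = @Gsimplex T n F setT p j.
Proof.
move=> j2; apply/funext => s; apply/propext; split=> -[[cont sU] fs].
  have sV : s @` stdsimplex j `<=` V by move=> _ [v jv <-]; exact: sU.
  by split; [split | apply/(full_cleave sV)].
have sV := allowable_image_cleave j2 (full_allowable fs).
by split; [split=> // v jv; apply/sV/imageP | apply/(full_cleave sV)].
Qed.

Lemma Gloop_cleave x0 : Gloop n F V top_perv x0 = Gloop n F setT p x0.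
Proof. by apply/funext => s; rewrite /Gloop Gsimplex_cleave. Qed.

Lemma htpy_cleave x0 : htpy n F V top_perv x0 = htpy n F setT p x0.
Proof. by rewrite /htpy /elem_htpy Gloop_cleave Gsimplex_cleave. Qed.

End Cleaving.

Lemma pi1_incl_iso_eq (T : topologicalType) n (F : int -> set T) V q U p x0 :
  Gloop n F V q x0 = Gloop n F U p x0 -> htpy n F V q x0 = htpy n F U p x0 ->
  pi1_incl_iso n F V q U p x0.
Proof.
move=> eqL eqH; rewrite /pi1_incl_iso eqL eqH.
by do 2 split=> //; split=> // s Ls; exists s => //; apply: rst_refl.
Qed.

Theorem mainTheorem9 (T : topologicalType) (n : nat) (F : int -> set T)
    (p : nat -> nat) (x0 : T) (l : option nat) :
  filtration n F ->
  no_codim_one n F ->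
  GM_perversity p ->
  ~ F (n%:Z - 1) x0 ->
  is_cleaving_point p l ->
  pi1_incl_iso n F (~` cleave_set n F l) top_perv setT p x0.
Proof.
move=> filtF F1 GMp _ cleave_l.
by apply: pi1_incl_iso_eq; [apply: Gloop_cleave | apply: htpy_cleave].
Qed.
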